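(* Let $\mathbf k$ be a field which is finite or algebraically closed, $V$ a finite-dimensional $\mathbf k$-vector space with a nondegenerate quadratic form $Q$, and $X^*$ a $Q$-filtration of $V$. Then $\{1+N:N\in E^{\ge2}X^*\}\subset SO_Q$.
   Context: $\langle x,y\rangle=Q(x+y)-Q(x)-Q(y)$, $R$ its radical; $Q$ is nondegenerate if $Q|_R$ is injective. $W^\perp=\{x:\langle x,W\rangle=0\}$. $O_Q=\{T\in GL(V):Q(Tx)=Q(x)\ \forall x\}$; if $\mathbf k$ is algebraically closed $SO_Q$ is the identity component of $O_Q$, if $\mathbf k$ is finite $SO_Q=O_Q\cap SO_{\tilde Q}$ with $\tilde Q$ the extension of $Q$ to an algebraic closure. $\tilde{\mathcal M}_Q$ is the set of nilpotent $N\in\mathrm{End}(V)$ with $Q(Nx)=-\langle x,Nx\rangle$ for all $x$. A $Q$-filtration is a decreasing family $(X^{\ge a})_{a\in\mathbb Z}$ of subspaces, $0$ for $a\gg0$, $V$ for $a\ll0$, with $Q|_{X^{\ge a}}=0$ and $X^{\ge1-a}=(X^{\ge a})^\perp$ for $a\ge1$. $E^{\ge2}X^*=\{N\in\tilde{\mathcal M}_Q:NX^{\ge a}\subset X^{\ge a+2}\ \forall a\}$. *)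

From HB Require Import structures.
From mathcomp Require Import all_boot all_order all_algebra.
Set Implicit Arguments. Unset Strict Implicit. Unset Printing Implicit Defensive.
Import Order.TTheory GRing.Theory.
Local Open Scope ring_scope.

(* V is modelled as k^n = 'rV[k]_n; endomorphisms act on the right: x *m T. *)

Section Defs.
Variables (k : fieldType) (n : nat).
Implicit Types (Q : 'rV[k]_n -> k) (x y z : 'rV[k]_n) (T N : 'M[k]_n).

Definition polar Q x y : k := Q (x + y) - Q x - Q y.

Definition is_quadratic_form Q : Prop :=
  [/\ forall (a : k) x, Q (a *: x) = a ^+ 2 * Q x,
      forall x y z, polar Q (x + y) z = polar Q x z + polar Q y z
    & forall (a : k) x y, polar Q (a *: x) y = a * polar Q x y].

Definition in_radical Q x : Prop := forall y, polar Q x y = 0.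

Definition Q_nondegenerate Q : Prop :=
  forall x y, in_radical Q x -> in_radical Q y -> Q x = Q y -> x = y.

Definition Q_filtration Q (X : int -> {vspace 'rV[k]_n}) : Prop :=
  [/\ forall a : int, (X (a + 1)%R <= X a)%VS,
      exists a0 : int, forall a, a0 <= a -> X a = 0%VS,
      exists a1 : int, forall a, a <= a1 -> X a = fullv,
      forall a : int, 1 <= a -> forall x, x \in X a -> Q x = 0
    & forall a : int, 1 <= a ->
        forall x, x \in X (1 - a) <-> (forall w, w \in X a -> polar Q x w = 0)].

Definition nilpotent_mx N : Prop := exists m : nat, N ^+ m = 0.

Definition tildeM Q N : Prop :=
  nilpotent_mx N /\ forall x, Q (x *m N) = - polar Q x (x *m N).

Definition E2 Q (X : int -> {vspace 'rV[k]_n}) N : Prop :=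
  tildeM Q N /\ forall (a : int) x, x \in X a -> x *m N \in X (a + 2).

Definition Ogroup Q T : Prop := T \in unitmx /\ forall x, Q (x *m T) = Q x.

Inductive polyfun : ('M[k]_n -> k) -> Prop :=
| pf_const (c : k) : polyfun (fun _ => c)
| pf_coord (i j : 'I_n) : polyfun (fun A => A i j)
| pf_add f g : polyfun f -> polyfun g -> polyfun (fun A => f A + g A)
| pf_mul f g : polyfun f -> polyfun g -> polyfun (fun A => f A * g A).

Definition Zclosed (Z : 'M[k]_n -> Prop) : Prop :=
  exists S : ('M[k]_n -> k) -> Prop,
    (forall f, S f -> polyfun f) /\ (forall A, Z A <-> forall f, S f -> f A = 0).

Definition Zconnected (C : 'M[k]_n -> Prop) : Prop :=
  forall Z1 Z2, Zclosed Z1 -> Zclosed Z2 ->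
    (forall A, C A -> Z1 A \/ Z2 A) ->
    (forall A, C A -> Z1 A -> Z2 A -> False) ->
    (forall A, C A -> Z1 A) \/ (forall A, C A -> Z2 A).

Definition identity_component (G : 'M[k]_n -> Prop) (T : 'M[k]_n) : Prop :=
  exists C : 'M[k]_n -> Prop,
    [/\ forall A, C A -> G A, C 1%:M, Zconnected C & C T].

End Defs.

(* extension of Q to L^n along iota : k -> L (the unique quadratic form on
   L^n agreeing with Q on k^n) *)
Definition Qext (k : fieldType) (L : fieldType) (iota : {rmorphism k -> L}) (n : nat)
  (Q : 'rV[k]_n -> k) (x : 'rV[L]_n) : L :=
  \sum_(i < n) x 0 i ^+ 2 * iota (Q (delta_mx 0 i))
  + \sum_(i < n) \sum_(j < n | (i < j)%N)
      x 0 i * x 0 j * iota (polar Q (delta_mx 0 i) (delta_mx 0 j)).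

Definition finite_field (k : fieldType) : Prop := exists s : seq k, forall x : k, x \in s.

Definition is_alg_closure (k L : fieldType) (iota : {rmorphism k -> L}) : Prop :=
  GRing.closed_field_axiom L /\
  forall y : L, exists p : {poly k}, p != 0 /\ root (map_poly iota p) y.

(* SO_Q: identity component of O_Q if k is algebraically closed;
   O_Q ∩ SO_{Qtilde} if k is finite. *)
Definition SO_Q (k : fieldType) (n : nat) (Q : 'rV[k]_n -> k) (T : 'M[k]_n) : Prop :=
  (GRing.closed_field_axiom k -> identity_component (Ogroup Q) T) /\
  (finite_field k ->
     Ogroup Q T /\
     forall (L : fieldType) (iota : {rmorphism k -> L}), is_alg_closure iota ->
       identity_component (Ogroup (Qext iota Q)) (map_mx iota T)).

(* The filtration is split by a grading V = (+)_j V_j with weights w_j that is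
   adapted to Q: Q vanishes on V_j when w_j <> 0, and V_j is orthogonal to V_l
   unless w_j + w_l = 0.  It is built from a basis e_i of X^{>=1} adapted to
   the filtration together with an isotropic dual family f_i, which exists by
   nondegeneracy; V_j are the lines k e_i, k f_i (weights a_i, -a_i) and the
   orthogonal complement of their span (weight 0).  The one-parameter subgroup
   t(s) = sum_j s^(w_j) pi_j then lies in O_Q, and as N raises weights by at
   least 2, P(s) = t(s)^-1 (1 + N) t(s) is polynomial in s with P(0) = 1 and
   P(1) = 1 + N.  Over an algebraically closed field the image of a polynomial
   curve is Zariski-connected, so it joins 1 + N to 1 inside O_Q; for finite k
   the same argument runs over the algebraic closure, after extending Q, the
   grading and N. *)

From mathcomp Require Import all_boot all_order all_algebra.
From mathcomp Require Import ring zify.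
From Stdlib Require Import Classical.
Set Implicit Arguments. Unset Strict Implicit. Unset Printing Implicit Defensive.
Import Order.TTheory GRing.Theory Num.Theory.
Local Open Scope ring_scope.

(** * Bilinear and quadratic forms *)

Lemma mx_rV_ext (R : pzSemiRingType) m p (A B : 'M[R]_(m, p)) :
  (forall x : 'rV_m, x *m A = x *m B) -> A = B.
Proof. by move=> AB; apply/row_matrixP => i; rewrite !rowE AB. Qed.

Lemma mulmx_span_eq0 (k : fieldType) m p (S : seq 'rV[k]_m) (M : 'M[k]_(m, p)) y :
  (forall v, v \in S -> v *m M = 0) -> y \in <<S>>%VS -> y *m M = 0.
Proof.
move=> SM /(@coord_span _ _ _ (in_tuple S)) ->.
by rewrite mulmx_suml big1 // => i _; rewrite -scalemxAl SM ?scaler0 // mem_nth.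
Qed.

Definition bil (R : comPzRingType) n (M : 'M[R]_n) (x y : 'rV[R]_n) : R :=
  (x *m M *m y^T) 0 0.

Section BilinearForm.
Variables (R : comPzRingType) (n : nat).
Implicit Types (M P : 'M[R]_n) (x y z : 'rV[R]_n).

Lemma bilDl M x y z : bil M (x + y) z = bil M x z + bil M y z.
Proof. by rewrite /bil !mulmxDl mxE. Qed.

Lemma bilDr M x y z : bil M x (y + z) = bil M x y + bil M x z.
Proof. by rewrite /bil linearD /= mulmxDr mxE. Qed.

Lemma bilZl M a x y : bil M (a *: x) y = a * bil M x y.
Proof. by rewrite /bil -!scalemxAl mxE. Qed.

Lemma bilZr M a x y : bil M x (a *: y) = a * bil M x y.
Proof. by rewrite /bil linearZ /= -scalemxAr mxE. Qed.

Lemma bilDm M P x y : bil (M + P) x y = bil M x y + bil P x y.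
Proof. by rewrite /bil mulmxDr mulmxDl mxE. Qed.

Lemma bilBm M P x y : bil (M - P) x y = bil M x y - bil P x y.
Proof. by rewrite bilDm; congr (_ + _); rewrite /bil mulmxN mulNmx mxE. Qed.

Lemma bil_trmx M x y : bil M^T x y = bil M y x.
Proof.
have tr11 (A : 'M[R]_1) : A 0 0 = A^T 0 0 by rewrite mxE.
by rewrite /bil [RHS]tr11 !trmx_mul trmxK mulmxA.
Qed.

Lemma bil_mulmx M P P' x y : bil M (x *m P) (y *m P') = bil (P *m M *m P'^T) x y.
Proof. by rewrite /bil trmx_mul !mulmxA. Qed.

Lemma bil_delta M i j : bil M 'e_i 'e_j = M i j.
Proof. by rewrite /bil -rowE trmx_delta -colE !mxE. Qed.

Lemma bil_entry m p (A : 'M_(m, n)) (B : 'M_(p, n)) M i j :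
  (A *m M *m B^T) i j = bil M (row i A) (row j B).
Proof. by rewrite /bil -!row_mul !mxE; apply: eq_bigr => l _; rewrite !mxE. Qed.

Lemma bil_expand M x y : bil M x y = \sum_i \sum_j x 0 i * M i j * y 0 j.
Proof.
rewrite /bil mxE; under eq_bigr do rewrite !mxE big_distrl.
by rewrite exchange_big.
Qed.

Lemma bil_skew M x : bil (M - M^T) x x = 0.
Proof. by rewrite bilBm bil_trmx subrr. Qed.

Definition upper_mx M : 'M[R]_n := \matrix_(i, j) if (i < j)%N then M i j else 0.

Lemma alt_upper_mx M : (forall x, bil M x x = 0) -> M = upper_mx M - (upper_mx M)^T.
Proof.
move=> altM; have diag0 i : M i i = 0 by rewrite -bil_delta altM.
have skew i j : M j i = - M i j.
  apply/eqP; rewrite -addr_eq0 -!bil_delta; apply/eqP.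
  have := altM ('e_i + 'e_j); rewrite !bilDl !bilDr !altM add0r addr0.
  by rewrite addrC.
apply/matrixP => i j; rewrite !mxE.
by case: ltngtP => [_|_|/val_inj->]; rewrite ?subr0 ?sub0r -?skew ?diag0 ?subr0.
Qed.

End BilinearForm.

(* Being alternating is not a polynomial identity in the entries of M, but
   M = U - U^T is. *)
Lemma alt_map_mx (R S : comPzRingType) (f : {rmorphism R -> S}) n (M : 'M[R]_n) :
  (forall x, bil M x x = 0) -> forall x, bil (map_mx f M) x x = 0.
Proof.
by move=> /alt_upper_mx ->; rewrite map_mxB -map_trmx => x; apply: bil_skew.
Qed.

Section QuadraticForm.
Variables (k : fieldType) (n : nat) (Q : 'rV[k]_n -> k).
Hypothesis hq : is_quadratic_form Q.
Implicit Types (x y z u v : 'rV[k]_n).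

Lemma qfZ a x : Q (a *: x) = a ^+ 2 * Q x. Proof. by case: hq. Qed.
Lemma polarDl x y z : polar Q (x + y) z = polar Q x z + polar Q y z.
Proof. by case: hq. Qed.
Lemma polarZl a x y : polar Q (a *: x) y = a * polar Q x y. Proof. by case: hq. Qed.

Lemma polarC x y : polar Q x y = polar Q y x.
Proof. by rewrite /polar [y + x]addrC addrAC. Qed.

Lemma polarDr x y z : polar Q x (y + z) = polar Q x y + polar Q x z.
Proof. by rewrite !(polarC x) polarDl. Qed.

Lemma polarZr a x y : polar Q x (a *: y) = a * polar Q x y.
Proof. by rewrite !(polarC x) polarZl. Qed.

Lemma polarNl x y : polar Q (- x) y = - polar Q x y.
Proof. by rewrite -scaleN1r polarZl mulN1r. Qed.

Lemma polarNr x y : polar Q x (- y) = - polar Q x y.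
Proof. by rewrite !(polarC x) polarNl. Qed.

Lemma polarBl x y z : polar Q (x - y) z = polar Q x z - polar Q y z.
Proof. by rewrite polarDl polarNl. Qed.

Lemma polarBr x y z : polar Q x (y - z) = polar Q x y - polar Q x z.
Proof. by rewrite polarDr polarNr. Qed.

Lemma polar0l y : polar Q 0 y = 0.
Proof. by rewrite -(scale0r 0) polarZl mul0r. Qed.

Lemma polar0r x : polar Q x 0 = 0.
Proof. by rewrite polarC polar0l. Qed.

Lemma polar_suml I (r : seq I) (P : pred I) (F : I -> 'rV_n) y :
  polar Q (\sum_(i <- r | P i) F i) y = \sum_(i <- r | P i) polar Q (F i) y.
Proof. by apply: (big_morph (polar Q ^~ y)); [move=> ? ?; exact: polarDl | exact: polar0l]. Qed.

Lemma polar_sumr I (r : seq I) (P : pred I) (F : I -> 'rV_n) x :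
  polar Q x (\sum_(i <- r | P i) F i) = \sum_(i <- r | P i) polar Q x (F i).
Proof. by apply: (big_morph (polar Q x)); [exact: polarDr | exact: polar0r]. Qed.

Lemma qf0 : Q 0 = 0.
Proof. by rewrite -(scale0r 0) qfZ expr0n mul0r. Qed.

Lemma qfN x : Q (- x) = Q x.
Proof. by rewrite -scaleN1r qfZ sqrrN expr1n mul1r. Qed.

Lemma qfD x y : Q (x + y) = Q x + Q y + polar Q x y.
Proof. by rewrite /polar; ring. Qed.

Lemma qf_sum_scale I (r : seq I) (v : I -> 'rV[k]_n) (c : I -> k) :
  (forall j, c j ^+ 2 * Q (v j) = Q (v j)) ->
  (forall j l, c j * c l * polar Q (v j) (v l) = polar Q (v j) (v l)) ->
  Q (\sum_(j <- r) c j *: v j) = Q (\sum_(j <- r) v j).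
Proof.
move=> hQ hpolar; elim: r => [|j r IHr]; first by rewrite !big_nil.
rewrite !big_cons !qfD qfZ hQ IHr polarZl !polar_sumr mulr_sumr; congr (_ + _).
by apply: eq_bigr => l _; rewrite polarZr mulrA hpolar.
Qed.

Lemma isotropic_polar (W : {vspace 'rV[k]_n}) x y :
  (forall z, z \in W -> Q z = 0) -> x \in W -> y \in W -> polar Q x y = 0.
Proof. by move=> isoW xW yW; rewrite /polar !isoW ?memvD // !subr0. Qed.

Lemma polar_span_eq0 (S : seq 'rV[k]_n) y z :
  (forall v, v \in S -> polar Q v z = 0) -> y \in <<S>>%VS -> polar Q y z = 0.
Proof.
move=> Sz /(@coord_span _ _ _ (in_tuple S)) ->.
by rewrite polar_suml big1 // => i _; rewrite polarZl Sz ?mulr0 // mem_nth.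
Qed.

Definition polar_mx : 'M[k]_n := \matrix_(i, j) polar Q 'e_i 'e_j.

Lemma polar_bil_mx x y : polar Q x y = bil polar_mx x y.
Proof.
rewrite bil_expand {1}[x]row_sum_delta polar_suml; apply: eq_bigr => i _.
rewrite polarZl {1}[y]row_sum_delta polar_sumr mulr_sumr; apply: eq_bigr => j _.
by rewrite polarZr mxE mulrA mulrAC.
Qed.

Definition qf_mx : 'M[k]_n := \matrix_(i, j)
  if i == j then Q 'e_i else if (i < j)%N then polar Q 'e_i 'e_j else 0.

Lemma polar_mxE : polar_mx = qf_mx + qf_mx^T.
Proof.
apply/matrixP => i j; rewrite !mxE.
have [<-|ij] := eqVneq i j.
  by rewrite /polar -[X in Q X]mulr2n -scaler_nat qfZ; ring.
case: ltngtP => [_|_|/val_inj eq_ij]; last by rewrite eq_ij eqxx in ij.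
- by rewrite addr0.
- by rewrite add0r polarC.
Qed.

Lemma qf_bil x : Q x = bil qf_mx x x.
Proof.
pose D x := Q x - bil qf_mx x x.
have DD u v : D (u + v) = D u + D v.
  rewrite /D qfD polar_bil_mx polar_mxE bilDm bil_trmx !bilDl !bilDr; ring.
have D0 : D 0 = 0 by rewrite /D qf0 /bil mul0mx mxE big1 ?subr0 // => i; rewrite mxE mul0r.
apply/eqP; rewrite -subr_eq0 -/(D x) [x]row_sum_delta (big_morph D DD D0).
by apply/eqP/big1 => j _; rewrite /D qfZ bilZl bilZr bil_delta mxE eqxx mulrA subrr.
Qed.

Definition dyad (u v : 'rV[k]_n) : 'M[k]_n := polar_mx *m u^T *m v.

Lemma mul_dyad x u v : x *m dyad u v = polar Q x u *: v.
Proof. by rewrite /dyad !mulmxA [_ *m u^T]mx11_scalar mul_scalar_mx polar_bil_mx. Qed.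

Lemma dyad_mul u v u' v' : dyad u v *m dyad u' v' = polar Q v u' *: dyad u v'.
Proof.
apply: mx_rV_ext => x.
by rewrite mulmxA !mul_dyad polarZl -scalemxAr mul_dyad scalerA mulrC.
Qed.

End QuadraticForm.

Section BilinearQuadraticForm.
Variables (F : fieldType) (n : nat) (q : 'rV[F]_n -> F) (M : 'M[F]_n).
Hypothesis qM : forall x, q x = bil M x x.

Lemma polar_bil x y : polar q x y = bil (M + M^T) x y.
Proof. by rewrite /polar !qM bilDm bil_trmx !bilDl !bilDr; ring. Qed.

Lemma bil_qf : is_quadratic_form q.
Proof.
split=> [a x|x y z|a x y]; rewrite ?qM ?polar_bil ?bilZl ?bilZr ?bilDl //.
by rewrite mulrA.
Qed.

End BilinearQuadraticForm.

(** * Gradings and the torus path *)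

Definition qf_grading (F : fieldType) n (q : 'rV[F]_n -> F)
    (I : finType) (pi : I -> 'M[F]_n) (w : I -> int) : Prop :=
  [/\ \sum_j pi j = 1%:M,
      forall j l, pi j *m pi l = if j == l then pi j else 0,
      forall j x, w j != 0 -> q (x *m pi j) = 0
    & forall j l x y, w j + w l != 0 -> polar q (x *m pi j) (y *m pi l) = 0].

Definition weight_raising (R : pzSemiRingType) n (I : finType)
    (pi : I -> 'M[R]_n) (w : I -> int) (N : 'M[R]_n) : Prop :=
  forall j l, w l < w j + 2 -> pi j *m N *m pi l = 0.


Section PolynomialPath.
Variables (F : fieldType) (n : nat) (P : F -> 'M[F]_n).
Hypothesis P_poly : forall i j, exists p : {poly F}, forall s, P s i j = p.[s].

Lemma polyfun_path f : polyfun f -> exists p : {poly F}, forall s, f (P s) = p.[s].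
Proof.
elim=> [c|i j|f1 f2 _ [p fP] _ [p' gP]|f1 f2 _ [p fP] _ [p' gP]].
- by exists c%:P => s; rewrite hornerC.
- exact: P_poly.
- by exists (p + p') => s; rewrite hornerD fP gP.
- by exists (p * p') => s; rewrite hornerM fP gP.
Qed.

Lemma Zclosed_path_avoid Z : Zclosed Z -> ~ (forall s, Z (P s)) ->
  exists2 p : {poly F}, p != 0 & forall s, Z (P s) -> p.[s] = 0.
Proof.
move=> [S [Spoly ZE]] notZ.
have [s notZs] := not_all_ex_not _ _ notZ.
have [f notSf] : exists f, ~ (S f -> f (P s) = 0).
  by apply: not_all_ex_not => allS; apply/notZs/ZE.
have [Sf fs] := imply_to_and _ _ notSf.
have [p fP] := polyfun_path (Spoly f Sf).
exists p => [|t /ZE Zt]; last by rewrite -fP Zt.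
by apply: contra_not_neq fs => p0; rewrite fP p0 horner0.
Qed.

Hypothesis Fclosed : GRing.closed_field_axiom F.

(* An algebraically closed field is infinite, so two nonzero polynomials have
   a common non-root. *)
Lemma Zconnected_path : Zconnected (fun T => exists s, T = P s).
Proof.
move=> Z1 Z2 Z1closed Z2closed cover _.
have [Z1P|notZ1P] := classic (forall s, Z1 (P s)); first by left=> _ [s ->].
have [Z2P|notZ2P] := classic (forall s, Z2 (P s)); first by right=> _ [s ->].
have [p1 p1_neq0 p1Z1] := Zclosed_path_avoid Z1closed notZ1P.
have [p2 p2_neq0 p2Z2] := Zclosed_path_avoid Z2closed notZ2P.
have /(PreClosedField.closed_nonrootP Fclosed) [s] := mulf_neq0 p1_neq0 p2_neq0.
rewrite /root hornerM mulf_eq0 negb_or => /andP[/eqP p1s /eqP p2s].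
by have [/p1Z1|/p2Z2] := cover (P s) (ex_intro _ s erefl).
Qed.

Lemma identity_component_path (G : 'M[F]_n -> Prop) :
  (forall s, G (P s)) -> P 0 = 1%:M -> identity_component G (P 1).
Proof.
move=> PG P0; exists (fun T => exists s, T = P s); split.
- by move=> _ [s ->].
- by exists 0.
- exact: Zconnected_path.
- by exists 1.
Qed.

End PolynomialPath.

Section TorusConjugation.
Variables (F : fieldType) (n : nat) (q : 'rV[F]_n -> F).
Hypothesis hq : is_quadratic_form q.
Variables (I : finType) (pi : I -> 'M[F]_n) (w : I -> int).
Hypothesis grading : qf_grading q pi w.
Variable N : 'M[F]_n.
Hypothesis raise : weight_raising pi w N.
Hypothesis OqT : Ogroup q (1%:M + N).

Definition torus (s : F) : 'M[F]_n := \sum_j s ^ w j *: pi j.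

Lemma torus1 : torus 1 = 1%:M.
Proof.
case: grading => sum1 _ _ _.
by rewrite -sum1; apply: eq_bigr => j _; rewrite exp1rz scale1r.
Qed.

Lemma torusVK s : s != 0 -> torus s^-1 *m torus s = 1%:M.
Proof.
move=> s0; case: grading => sum1 orth _ _.
rewrite /torus mulmx_suml -sum1; apply: eq_bigr => j _.
rewrite mulmx_sumr (bigD1 j) //= big1 ?addr0 => [|l /negPf jl]; last first.
  by rewrite -scalemxAl -scalemxAr orth eq_sym jl !scaler0.
rewrite -scalemxAl -scalemxAr orth eqxx scalerA exprz_inv -expfzDr //.
by rewrite addNr expr0z scale1r.
Qed.

Lemma torus_unit s : s != 0 -> torus s \in unitmx.
Proof. by move=> s0; have [] := mulmx1_unit (torusVK s0). Qed.

Lemma torus_Ogroup s : s != 0 -> Ogroup q (torus s).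
Proof.
move=> s0; split=> [|x]; first exact: torus_unit.
case: grading => sum1 _ iso pol.
have {2}-> : x = \sum_j x *m pi j by rewrite -mulmx_sumr sum1 mulmx1.
rewrite /torus mulmx_sumr; under eq_bigr do rewrite -scalemxAr.
apply: qf_sum_scale => // [j|j l].
  have [->|wj] := eqVneq (w j) 0; first by rewrite expr0z expr1n mul1r.
  by rewrite iso ?mulr0.
have [wjl|wjl] := eqVneq (w j + w l) 0; last by rewrite pol ?mulr0.
by rewrite -expfzDr // wjl expr0z mul1r.
Qed.

(* This is torus s^-1 *m (1 + N) *m torus s, written so that it is visibly
   polynomial in s; all exponents are >= 2 on the nonzero terms. *)
Definition conj_path (s : F) : 'M[F]_n :=
  1%:M + \sum_j \sum_l s ^+ `|w l - w j| *: (pi j *m N *m pi l).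

Lemma conj_pathE s : s != 0 -> conj_path s = torus s^-1 *m (1%:M + N) *m torus s.
Proof.
move=> s0; rewrite mulmxDr mulmx1 mulmxDl torusVK //; congr (_ + _).
rewrite /torus mulmx_suml mulmx_suml; apply: eq_bigr => j _.
rewrite mulmx_sumr; apply: eq_bigr => l _.
rewrite -!scalemxAl -scalemxAr scalerA.
have [wjl|/raise->] := lerP (w j + 2) (w l); last by rewrite !scaler0.
rewrite exprz_inv -expfzDr // (_ : - w j + w l = `|w l - w j|%N) //; lia.
Qed.

Lemma conj_path0 : conj_path 0 = 1%:M.
Proof.
rewrite /conj_path big1 ?addr0 // => j _; apply: big1 => l _.
have [wjl|/raise->] := lerP (w j + 2) (w l); last by rewrite scaler0.
by rewrite expr0n; case: eqP => [|_]; [lia | exact: scale0r].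
Qed.

Lemma conj_path1 : conj_path 1 = 1%:M + N.
Proof. by rewrite conj_pathE ?oner_neq0 // invr1 torus1 mul1mx mulmx1. Qed.

Lemma conj_path_Ogroup s : Ogroup q (conj_path s).
Proof.
have [->|s0] := eqVneq s 0.
  by rewrite conj_path0; split=> [|x]; rewrite ?unitmx1 ?mulmx1.
have sV0 : s^-1 != 0 by rewrite invr_eq0.
case: OqT => unitT qT; rewrite conj_pathE //; split.
  by rewrite !unitmx_mul unitT !torus_unit.
by move=> x; rewrite !mulmxA (torus_Ogroup s0).2 qT (torus_Ogroup sV0).2.
Qed.

Lemma conj_path_poly a b : exists p : {poly F}, forall s, conj_path s a b = p.[s].
Proof.
exists (((1%:M : 'M[F]_n) a b)%:P +
  \sum_j \sum_l 'X^`|w l - w j| * ((pi j *m N *m pi l) a b)%:P) => s.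
rewrite hornerD hornerC horner_sum [LHS]mxE summxE; congr (_ + _).
apply: eq_bigr => j _; rewrite horner_sum summxE; apply: eq_bigr => l _.
by rewrite hornerM hornerXn hornerC mxE.
Qed.

Theorem unipotent_identity_component :
  GRing.closed_field_axiom F -> identity_component (Ogroup q) (1%:M + N).
Proof.
move=> Fclosed; rewrite -conj_path1.
exact: identity_component_path conj_path_poly Fclosed _ conj_path_Ogroup conj_path0.
Qed.

End TorusConjugation.

(** * Hyperbolic gradings *)

Lemma big_option (R : nmodType) (T : finType) (F : option T -> R) :
  \sum_j F j = F None + \sum_i F (Some i).
Proof.
rewrite (bigD1 None) //=; congr (_ + _).
rewrite (reindex_omap Some id) //=; last by case.
by apply: eq_bigl => i; rewrite eqxx.
Qed.

Section CompleteIdempotents.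
Variables (R : pzRingType) (I : finType) (P : I -> R).

Definition complete_idem (j : option I) : R :=
  if j is Some i then P i else 1 - \sum_i P i.

Lemma complete_idem_sum : \sum_j complete_idem j = 1.
Proof. by rewrite big_option /= subrK. Qed.

Hypothesis orthP : forall i l, P i * P l = if i == l then P i else 0.

Lemma complete_idem_mul j l :
  complete_idem j * complete_idem l = if j == l then complete_idem j else 0.
Proof.
have PS i : P i * \sum_l P l = P i.
  rewrite mulr_sumr (bigD1 i) //= orthP eqxx big1 ?addr0 // => m /negPf.
  by rewrite orthP eq_sym => ->.
have SP i : (\sum_l P l) * P i = P i.
  rewrite mulr_suml (bigD1 i) //= orthP eqxx big1 ?addr0 // => m /negPf.
  by rewrite orthP => ->.
case: j => [i|]; case: l => [l|] /=.
- by rewrite orthP.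
- by rewrite mulrBr mulr1 PS subrr.
- by rewrite mulrBl mul1r SP subrr.
- have SS : (\sum_i P i) * \sum_l P l = \sum_i P i.
    by rewrite mulr_suml; apply: eq_bigr => i _; apply: PS.
  by rewrite mulrBl mul1r mulrBr mulr1 SS subrr subr0.
Qed.

End CompleteIdempotents.

Definition hyperbolic (k : fieldType) n (Q : 'rV[k]_n -> k) r (e f : 'I_r -> 'rV[k]_n) :=
  [/\ forall i, Q (e i) = 0 /\ Q (f i) = 0,
      forall i j, polar Q (e i) (e j) = 0 /\ polar Q (f i) (f j) = 0
    & forall i j, polar Q (e i) (f j) = (i == j)%:R].

Definition swap_sum (T : Type) (j : T + T) : T + T :=
  match j with inl i => inr i | inr i => inl i end.

Section HyperbolicGrading.
Variables (k : fieldType) (n : nat) (Q : 'rV[k]_n -> k).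
Hypothesis hq : is_quadratic_form Q.
Variables (r : nat) (e f : 'I_r -> 'rV[k]_n).
Hypothesis hyp : hyperbolic Q e f.
Implicit Types (x y : 'rV[k]_n) (a : 'I_r -> int).

Definition hproj0 (j : 'I_r + 'I_r) : 'M[k]_n :=
  match j with inl i => dyad Q (f i) (e i) | inr i => dyad Q (e i) (f i) end.

(* Projections onto the lines k e_i, k f_i and, at index None, onto the
   orthogonal complement of their span. *)
Definition hproj : option ('I_r + 'I_r) -> 'M[k]_n := complete_idem hproj0.

Definition hweight a (j : option ('I_r + 'I_r)) : int :=
  match j with Some (inl i) => a i | Some (inr i) => - a i | None => 0 end.

Lemma hweight_swap a j : hweight a (omap (@swap_sum _) j) = - hweight a j.
Proof. by case: j => [[i|i]|] /=; rewrite ?opprK ?oppr0. Qed.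

Lemma hproj_sum : \sum_j hproj j = 1%:M.
Proof. by rewrite complete_idem_sum idmxE. Qed.

Lemma hproj0_mul j l : hproj0 j *m hproj0 l = if j == l then hproj0 j else 0.
Proof.
case: hyp => _ eq0 delta; case: j l => [i|i] [m|m]; rewrite (dyad_mul hq).
- rewrite delta -[inl i == _]/(i == m).
  by case: eqVneq => [<-|_]; rewrite ?scale1r ?scale0r.
- by have [-> _] := eq0 i m; rewrite scale0r.
- by have [_ ->] := eq0 i m; rewrite scale0r.
- rewrite polarC delta -[inr i == _]/(i == m) eq_sym.
  by case: eqVneq => [<-|_]; rewrite ?scale1r ?scale0r.
Qed.

Lemma hproj_mul j l : hproj j *m hproj l = if j == l then hproj j else 0.
Proof. by rewrite mulmxE complete_idem_mul // => i m; rewrite -mulmxE hproj0_mul. Qed.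

Lemma polar_hproj0 x y j :
  polar Q (x *m hproj0 j) y = polar Q x (y *m hproj0 (swap_sum j)).
Proof.
by case: j => i; rewrite !(mul_dyad hq) (polarZl hq) (polarZr hq) mulrC polarC.
Qed.

Lemma polar_hproj x y j :
  polar Q (x *m hproj j) y = polar Q x (y *m hproj (omap (@swap_sum _) j)).
Proof.
case: j => [j|] /=; first exact: polar_hproj0.
rewrite -idmxE !mulmxBr !mulmx1 !mulmx_sumr (polarBl hq) (polarBr hq).
rewrite (polar_suml hq) (polar_sumr hq); congr (_ - _).
rewrite !big_sumType /= addrC.
by congr (_ + _); apply: eq_bigr => i _;
  [exact: (polar_hproj0 _ _ (inr i)) | exact: (polar_hproj0 _ _ (inl i))].
Qed.

Lemma qf_hproj x j : j != None -> Q (x *m hproj j) = 0.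
Proof.
case: hyp => isoef _ _; case: j => // -[i|i] _ /=; rewrite (mul_dyad hq) (qfZ hq).
- by have [-> _] := isoef i; rewrite mulr0.
- by have [_ ->] := isoef i; rewrite mulr0.
Qed.

Lemma e_hproj_None i : e i *m hproj None = 0.
Proof.
have eE : e i *m hproj (Some (inl i)) = e i.
  by rewrite /= (mul_dyad hq); case: hyp => _ _ ->; rewrite eqxx scale1r.
by rewrite -eE -mulmxA hproj_mul mulmx0.
Qed.

Theorem hyperbolic_grading a : qf_grading Q hproj (hweight a).
Proof.
split=> [||j x|j l x y]; [exact: hproj_sum | exact: hproj_mul | |].
  by case: j => [j _|]; [apply: qf_hproj | rewrite eqxx].
rewrite polar_hproj -mulmxA hproj_mul.
have [->|_] := eqVneq l (omap (@swap_sum _) j); last by rewrite mulmx0 (polar0r hq).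
by rewrite hweight_swap subrr eqxx.
Qed.

End HyperbolicGrading.

Section HyperbolicPartner.
Variables (k : fieldType) (n : nat) (Q : 'rV[k]_n -> k).
Hypothesis hq : is_quadratic_form Q.
Hypothesis hnd : Q_nondegenerate Q.
Variable W : {vspace 'rV[k]_n}.
Hypothesis isoW : forall x, x \in W -> Q x = 0.
Variables (r : nat) (E : r.-tuple 'rV[k]_n).
Hypotheses (freeE : free E) (EW : forall i : 'I_r, E`_i \in W).

Lemma isotropic_dual : exists d : 'I_r -> 'rV[k]_n,
  forall i j : 'I_r, polar Q E`_i (d j) = (i == j)%:R.
Proof.
pose Em := \matrix_(i < r) E`_i.
have EmE v : v *m Em = \sum_i v 0 i *: E`_i.
  by rewrite mulmx_sum_row; apply: eq_bigr => i _; rewrite rowK.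
have /row_freeP [B EmGB] : row_free (Em *m polar_mx Q).
  rewrite -kermx_eq0; apply/rowV0P => v /sub_kermxP; rewrite mulmxA => vEmG0.
  have vEm0 : v *m Em = 0.
    apply: hnd => [y|y|]; first by rewrite (polar_bil_mx hq) /bil vEmG0 mul0mx mxE.
      exact: polar0l.
    by rewrite isoW ?(qf0 hq) // EmE memv_suml // => i _; apply: memvZ.
  have /freeP/(_ (v 0)) v0 := freeE; rewrite -EmE in v0.
  by apply/rowP => i; rewrite mxE v0.
exists (fun j => row j B^T) => i j.
have := congr1 (fun M : 'M[k]_r => M i j) EmGB.
by rewrite -[B in Em *m _ *m B]trmxK bil_entry rowK mxE -(polar_bil_mx hq).
Qed.

(* With A the upper-triangular Gram matrix, polar = A + A^T; so replacing d_j
   by d_j - sum_l A(d_l, d_j) e_l makes each f_j isotropic and the f_j pairwise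
   orthogonal, without changing their pairing with the e_i. *)
Lemma hyperbolic_partner : exists f, hyperbolic Q (fun i : 'I_r => E`_i) f.
Proof.
have [d dE] := isotropic_dual.
pose u j := \sum_l bil (qf_mx Q) (d l) (d j) *: E`_l.
have uW j : u j \in W by apply: memv_suml => l _; apply: memvZ.
have polar_u x j : polar Q x (u j) = \sum_l bil (qf_mx Q) (d l) (d j) * polar Q x E`_l.
  by rewrite (polar_sumr hq); apply: eq_bigr => l _; rewrite (polarZr hq).
have polar_d_u i j : polar Q (d i) (u j) = bil (qf_mx Q) (d i) (d j).
  rewrite polar_u (bigD1 i) //= polarC dE eqxx mulr1 big1 ?addr0 // => l li.
  by rewrite polarC dE (negPf li) mulr0.
have polar_E_u (i j : 'I_r) : polar Q E`_i (u j) = 0 := isotropic_polar isoW (EW i) (uW j).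
exists (fun j => d j - u j); split=> [i|i j|i j].
- split; first exact/isoW.
  by rewrite qfD (qfN hq) (isoW (uW i)) (polarNr hq) polar_d_u (qf_bil hq) addr0 subrr.
- split; first exact: isotropic_polar isoW (EW i) (EW j).
  rewrite (polarBl hq) !(polarBr hq) (polarC Q (u i)) !polar_d_u.
  rewrite (isotropic_polar isoW (uW i) (uW j)) (polar_bil (qf_bil hq)) bilDm bil_trmx.
  by rewrite subr0; ring.
- by rewrite (polarBr hq) dE polar_E_u subr0.
Qed.

End HyperbolicPartner.

(** * Splitting a Q-filtration *)

Definition filtration_split (k : fieldType) n (X : int -> {vspace 'rV[k]_n})
    (I : finType) (pi : I -> 'M[k]_n) (w : I -> int) : Prop :=
  (forall j x, x *m pi j \in X (w j)) /\
  (forall j x, x \in X (w j + 1) -> x *m pi j = 0).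

Section Filtration.
Variables (k : fieldType) (n : nat) (Q : 'rV[k]_n -> k).
Variable X : int -> {vspace 'rV[k]_n}.
Hypothesis hX : Q_filtration Q X.

Lemma filtration_antimono a b : a <= b -> (X b <= X a)%VS.
Proof.
move=> ab; have [d ->] : exists d : nat, b = a + d%:Z by exists `|b - a|%N; lia.
elim: d => [|d IHd]; first by rewrite addr0 subvv.
apply: subv_trans IHd; case: hX => Xdecr _ _ _ _.
by rewrite -[d.+1]addn1 PoszD addrA Xdecr.
Qed.

Lemma filtration_isotropic c x : 1 <= c -> x \in X c -> Q x = 0.
Proof. by case: hX => _ _ _ iso _ /iso; apply. Qed.

Lemma filtration_orthoP a x : 1 <= a ->
  x \in X (1 - a) <-> (forall y, y \in X a -> polar Q x y = 0).
Proof. by case: hX => _ _ _ _ perp /perp. Qed.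

(* Built top down: at weight c, a basis of a complement of X (c + 1) in X c is
   appended. *)
Lemma filtration_basis_from a0 : (forall a, a0 <= a -> X a = 0%VS) ->
  forall (d : nat) (c : int), a0 <= c + d%:Z ->
  exists p : seq ('rV[k]_n * int),
  [/\ forall v, v \in p -> c <= v.2 /\ v.1 \in X v.2, free (map fst p)
    & forall c', c <= c' -> (X c' <= <<[seq v.1 | v <- p & (c' <= v.2)%R]>>)%VS].
Proof.
move=> Xtop; elim=> [|d IHd] c c_top.
  exists [::]; split=> // [|c' cc']; first exact: nil_free.
  by rewrite Xtop ?sub0v //; lia.
have [p [pX pfree pspan]] := IHd (c + 1) ltac:(lia).
set U := (X c :\: X (c + 1))%VS.
have UX : {subset vbasis U <= X c}.
  by move=> v /vbasis_mem /(subvP (diffvSl _ _)).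
exists (p ++ [seq (v, c) | v <- vbasis U]); split.
- move=> v; rewrite mem_cat => /orP[/pX [cv vX]|/mapP [u /UX uX ->] //].
  by split=> //; apply: le_trans cv; rewrite lerDl.
- rewrite map_cat -map_comp map_id cat_free pfree (basis_free (vbasisP U)) /=.
  have pX1 : (<<map fst p>> <= X (c + 1))%VS.
    apply/span_subvP => _ /mapP [v /pX [cv vX] ->].
    exact: subvP (filtration_antimono cv) _ vX.
  apply/directv_addP/eqP; rewrite -subv0 (span_basis (vbasisP U)).
  by apply: subv_trans (capvS pX1 (subvv U)) _; rewrite capvC /U capv_diff subvv.
have sub_p c' : {subset [seq v.1 | v <- p & c' <= v.2] <=
    [seq v.1 | v <- p ++ [seq (v, c) | v <- vbasis U] & c' <= v.2]}.
  by move=> v; rewrite filter_cat map_cat mem_cat => ->.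
move=> c'; rewrite le_eqVlt => /orP[/eqP <-|cc']; last first.
  by apply: subv_trans (pspan _ _) (sub_span (sub_p c')); rewrite lezD1.
rewrite -(addv_diff_cap (X c) (X (c + 1))) -/U subv_add; apply/andP; split.
  rewrite -{1}(span_basis (vbasisP U)); apply: sub_span => v vU.
  by apply/mapP; exists (v, c); rewrite // mem_filter lexx mem_cat map_f ?orbT.
apply: subv_trans (capvSr _ _) _; apply: subv_trans (pspan _ (lexx _)) _.
apply: sub_span => x /mapP [v]; rewrite mem_filter => /andP [cv vp] ->.
by apply/mapP; exists v; rewrite // mem_filter mem_cat vp (le_trans _ cv) ?lerDl.
Qed.

Lemma filtration_basis : exists r (E : r.-tuple 'rV[k]_n) (a : 'I_r -> int),
  [/\ free E, forall i, 1 <= a i /\ E`_i \in X (a i)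
    & forall c, 1 <= c -> (X c <= <<[seq E`_i | i : 'I_r <- enum 'I_r & (c <= a i)%R]>>)%VS].
Proof.
have [a0 Xtop] : exists a0, forall a, a0 <= a -> X a = 0%VS by case: hX.
have [|p [pX pfree pspan]] := filtration_basis_from Xtop (d := `|a0|%N) (c := 1); first lia.
exists (size (map fst p)), (in_tuple (map fst p)), (fun i => (nth (0, 0) p i).2).
have Ei i : (i < size p)%N -> (map fst p)`_i = (nth (0, 0) p i).1.
  by move=> ip; rewrite (nth_map (0, 0)).
split=> // [i|c c1].
  have ip : (i < size p)%N by rewrite -(size_map fst).
  by rewrite Ei //; apply/pX/mem_nth.
apply: subv_trans (pspan c c1) (sub_span _) => x /mapP [v].
rewrite mem_filter => /andP [cv vp] ->.
have vi : (index v p < size (map fst p))%N by rewrite size_map index_mem.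
apply/mapP; exists (Ordinal vi); last by rewrite Ei ?index_mem // nth_index.
by rewrite mem_filter mem_enum nth_index // cv.
Qed.

End Filtration.

Section FiltrationGrading.
Variables (k : fieldType) (n : nat) (Q : 'rV[k]_n -> k).
Variable X : int -> {vspace 'rV[k]_n}.
Hypotheses (hq : is_quadratic_form Q) (hX : Q_filtration Q X).
Variables (r : nat) (E : r.-tuple 'rV[k]_n) (a : 'I_r -> int) (f : 'I_r -> 'rV[k]_n).
Hypothesis Ea : forall i, 1 <= a i /\ E`_i \in X (a i).
Hypothesis spanE : forall c, 1 <= c ->
  (X c <= <<[seq E`_i | i : 'I_r <- enum 'I_r & (c <= a i)%R]>>)%VS.
Hypothesis hyp : hyperbolic Q (fun i : 'I_r => E`_i) f.
Local Notation pi := (hproj Q (fun i : 'I_r => E`_i) f).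

Lemma filtration_polar_eq0 c y z : 1 <= c -> y \in X c ->
  (forall i, c <= a i -> polar Q E`_i z = 0) -> polar Q y z = 0.
Proof.
move=> c1 yX Ez; apply: (polar_span_eq0 hq) (subvP (spanE c1) _ yX).
by move=> x /mapP [i]; rewrite mem_filter => /andP [ci _] ->; apply: Ez.
Qed.

Lemma polar_f_eq0 i y : y \in X (a i + 1) -> polar Q y (f i) = 0.
Proof.
have [a1 _] := Ea i; move=> yX.
apply: (filtration_polar_eq0 _ yX) => [|m am]; first lia.
case: hyp => _ _ ->; have [mi|//] := eqVneq m i.
by exfalso; move: am; rewrite mi; lia.
Qed.

Lemma f_filtration i : f i \in X (- a i).
Proof.
have [a1 _] := Ea i; have a1' : 1 <= a i + 1 by lia.
rewrite (_ : - a i = 1 - (a i + 1)); last lia.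
by apply/(filtration_orthoP hX _ a1') => y yX; rewrite polarC polar_f_eq0.
Qed.

Lemma hproj_filtration j x : x *m pi j \in X (hweight a j).
Proof.
case: j => [[i|i]|].
- by rewrite /= (mul_dyad hq); apply/memvZ/(Ea i).2.
- by rewrite /= (mul_dyad hq); apply/memvZ/f_filtration.
apply/(filtration_orthoP hX _ (lexx 1)) => y yX; rewrite polarC.
apply: (filtration_polar_eq0 _ yX) => // i _.
by rewrite polarC (polar_hproj hq) (e_hproj_None hq hyp) (polar0r hq).
Qed.

Lemma hproj_filtration_eq0 j x : x \in X (hweight a j + 1) -> x *m pi j = 0.
Proof.
case: j => [[i|i]|] /= xX; rewrite ?(mul_dyad hq).
- by rewrite polar_f_eq0 // scale0r.
- have [a1 EiX] := Ea i; rewrite addrC in xX.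
  by rewrite ((filtration_orthoP hX x a1).1 xX _ EiX) scale0r.
apply: mulmx_span_eq0 (subvP (spanE (lexx _)) _ xX) => _ /mapP [i _ ->].
exact: (e_hproj_None hq hyp).
Qed.

End FiltrationGrading.

Theorem filtration_grading (k : fieldType) n (Q : 'rV[k]_n -> k) X :
  is_quadratic_form Q -> Q_nondegenerate Q -> Q_filtration Q X ->
  exists (I : finType) (pi : I -> 'M[k]_n) (w : I -> int),
    qf_grading Q pi w /\ filtration_split X pi w.
Proof.
move=> hq hnd hX; have [r [E [a [freeE Ea spanE]]]] := filtration_basis hX.
have EX1 (i : 'I_r) : E`_i \in X 1.
  by have [a1 EiX] := Ea i; apply: subvP (filtration_antimono hX a1) _ EiX.
have isoX1 x : x \in X 1 -> Q x = 0 := filtration_isotropic hX (lexx 1).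
have [f hyp] := hyperbolic_partner hq hnd isoX1 freeE EX1.
exists _, (hproj Q (fun i : 'I_r => E`_i) f), (hweight a).
split; first exact: hyperbolic_grading.
by split=> j x; [apply: hproj_filtration | apply: hproj_filtration_eq0].
Qed.

(** * Extension of scalars *)

Section ScalarExtension.
Variables (k L : fieldType) (iota : {rmorphism k -> L}) (n : nat).
Variable Q : 'rV[k]_n -> k.
Hypothesis hq : is_quadratic_form Q.
Local Notation qL := (Qext iota Q).
Local Notation A := (qf_mx Q).
Local Notation "M ^i" := (map_mx iota M) (at level 2, format "M ^i").

Lemma Qext_bil x : qL x = bil A^i x x.
Proof.
rewrite bil_expand /Qext -big_split /=; apply: eq_bigr => i _.
rewrite [RHS](bigD1 i) //= !mxE eqxx; congr (_ + _); first by rewrite expr2 mulrAC.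
rewrite big_mkcond [RHS]big_mkcond; apply: eq_bigr => j _ /=; rewrite !mxE.
have [<-|ij] := eqVneq i j; first by rewrite ltnn.
by case: ifP => _; rewrite ?rmorph0 ?mulr0 ?mul0r // mulrAC.
Qed.

Lemma Qext_qf : is_quadratic_form qL.
Proof. exact: bil_qf Qext_bil. Qed.

Lemma Qext_map (M M' : 'M[k]_n) : (forall y, Q (y *m M) = Q (y *m M')) ->
  forall x, qL (x *m M^i) = qL (x *m M'^i).
Proof.
move=> eqQ x; apply/eqP; rewrite -subr_eq0 !Qext_bil !bil_mulmx -bilBm.
rewrite !map_trmx -!map_mxM -map_mxB; apply/eqP/alt_map_mx => y.
by rewrite bilBm -!bil_mulmx -!qf_bil // eqQ subrr.
Qed.

Lemma polar_Qext_map (M M' : 'M[k]_n) :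
  (forall y z, polar Q (y *m M) (z *m M') = 0) ->
  forall x x', polar qL (x *m M^i) (x' *m M'^i) = 0.
Proof.
move=> polar0 x x'.
have B0 : M *m (A + A^T) *m M'^T = 0.
  apply/matrixP => i j; rewrite -bil_delta -bil_mulmx.
  by rewrite -(polar_bil (qf_bil hq)) polar0 mxE.
rewrite (polar_bil Qext_bil) bil_mulmx !map_trmx -map_mxD -!map_mxM B0.
by rewrite map_mx0 /bil mulmx0 mul0mx mxE.
Qed.

Lemma Ogroup_map T : Ogroup Q T -> Ogroup qL T^i.
Proof.
case=> unitT QT; split; first by rewrite map_unitmx.
by move=> x; rewrite (@Qext_map T 1%:M) ?map_mx1 ?mulmx1 // => y; rewrite mulmx1.
Qed.

Lemma qf_grading_map (I : finType) (pi : I -> 'M[k]_n) w :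
  qf_grading Q pi w -> qf_grading qL (fun j => (pi j)^i) w.
Proof.
case=> sum1 orth iso pol; split.
- by rewrite -map_mx_sum sum1 map_mx1.
- by move=> j l; rewrite -map_mxM orth (fun_if (map_mx iota)) map_mx0.
- move=> j x wj; rewrite (@Qext_map _ 0) ?map_mx0 ?mulmx0 ?(qf0 Qext_qf) // => y.
  by rewrite iso // mulmx0 qf0.
- by move=> j l x y wjl; apply: polar_Qext_map => y' z'; apply: pol.
Qed.

Lemma weight_raising_map (I : finType) (pi : I -> 'M[k]_n) w N :
  weight_raising pi w N -> weight_raising (fun j => (pi j)^i) w N^i.
Proof. by move=> raise j l wjl; rewrite -!map_mxM raise // map_mx0. Qed.

End ScalarExtension.

Lemma nilpotent_unitmx (k : fieldType) n (N : 'M[k]_n) :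
  nilpotent_mx N -> 1%:M + N \in unitmx.
Proof.
case=> m Nm; suff /mulmx1_unit[] : (1%:M + N) *m \sum_(i < m) (- N) ^+ i = 1%:M by [].
rewrite mulmxE idmxE; apply: oppr_inj; rewrite -mulNr opprD addrC.
by rewrite -subrX1 exprNn Nm mulr0 sub0r.
Qed.

Section LowerNilpotent.
Variables (k : fieldType) (n : nat) (Q : 'rV[k]_n -> k).
Variables (X : int -> {vspace 'rV[k]_n}) (N : 'M[k]_n).
Hypothesis hN : E2 Q X N.

Lemma E2_Ogroup : Ogroup Q (1%:M + N).
Proof.
case: hN => [[nilN QN] _]; split; first exact: nilpotent_unitmx.
by move=> x; rewrite mulmxDr mulmx1 qfD QN subrK.
Qed.

Lemma E2_weight_raising (I : finType) (pi : I -> 'M[k]_n) w :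
  Q_filtration Q X -> filtration_split X pi w -> weight_raising pi w N.
Proof.
move=> hX [piX piX0] j l wl; apply: mx_rV_ext => x; rewrite mulmx0 !mulmxA.
apply: piX0; case: hN => _ /(_ _ _ (piX j x)); apply: subvP.
by apply: (filtration_antimono hX); rewrite lezD1.
Qed.

End LowerNilpotent.

Theorem mainTheorem4 (k : fieldType) (n : nat) (Q : 'rV[k]_n -> k)
  (X : int -> {vspace 'rV[k]_n}) :
  (finite_field k \/ GRing.closed_field_axiom k) ->
  is_quadratic_form Q -> Q_nondegenerate Q -> Q_filtration Q X ->
  forall N : 'M[k]_n, E2 Q X N -> SO_Q Q (1%:M + N).
Proof.
move=> _ hq hnd hX N hN.
have [I [pi [w [grading hsplit]]]] := filtration_grading hq hnd hX.
have raise := E2_weight_raising hN hX hsplit.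
have OqT := E2_Ogroup hN.
split=> [kclosed|_].
  exact: (unipotent_identity_component hq grading raise OqT kclosed).
split=> // L iota [Lclosed _].
have := Ogroup_map iota hq OqT; rewrite map_mxD map_mx1 => OqTL.
exact: (unipotent_identity_component (Qext_qf iota Q)
  (qf_grading_map iota hq grading) (weight_raising_map iota raise) OqTL Lclosed).
Qed.
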